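(* Let $P(x)=3(x/\Upsilon)^2-2(x/\Upsilon)^3$, $Q(x)=1-P(\Upsilon+(1-\Upsilon)x)$, $\vartheta=10^{-10}$, $\Upsilon=0.64$. Then for all real $u\ge10$ and all real $v\ne0$ with $|v|\le5u$, $$\mathscr V(u,v)\le 1+e^{-u/2}.$$
   Context: Put $\kappa:=1-5\vartheta$, $w:=u+iv$, and define (sums over $j$ are finite since $P,Q$ are cubic) $\mathcal P(w):=e^{-2w\kappa}\sum_{j\ge2}\frac{P^{(j)}(0)}{(-2w\kappa)^j}$, $\mathcal Q(w):=e^{-2w\kappa(1-\Upsilon)}\sum_{j\ge2}\frac{Q^{(j)}(0)}{(-2w\kappa(1-\Upsilon))^j}$, $D(x):=\frac{iv}{w}P'(x)+\frac{u}{2w^2\kappa}P''(x)-\frac{u}{4w^3\kappa^2}P'''(x)$, $E(x):=\frac{u}{w}P'(x)+\frac{iv}{2w^2\kappa}P''(x)-\frac{iv}{4w^3\kappa^2}P'''(x)$. Then $\mathscr V(u,v):=\mathscr V_1+\mathscr V_2+\mathscr V_3$ with $\mathscr V_1:=1+\frac{1}{2u\kappa}\int_0^\Upsilon e^{-2u(1-x)\kappa}P'(x)^2dx$; $\mathscr V_2:=e^{-4u}\Big[-\frac{1}{2u\kappa}\int_0^\Upsilon e^{-2u(1-x)\kappa}|D(x)|^2dx+2\Re\Big\{\overline{\mathcal P(w)}\int_0^\Upsilon e^{-2iv(1-x)\kappa}D(x)\,dx\Big\}+\big(e^{2u\kappa(1-\Upsilon)}-e^{2u\kappa}\big)|\mathcal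 P(w)|^2+\big(1-e^{2u\kappa(1-\Upsilon)}\big)|\mathcal P(w)+\mathcal Q(w)|^2\Big]$; $\mathscr V_3:=-2\Re\Big\{e^{-2w}\Big[\frac{1}{-2iv\kappa}\int_0^\Upsilon e^{-2u(1-x)\kappa}\big(-2iv\kappa P(x)+P'(x)\big)E(x)\,dx+\mathcal P(w)\int_0^\Upsilon e^{2iv(1-x)\kappa}\big(-2iv\kappa P(x)+P'(x)\big)dx+\big(1-e^{2iv(1-\Upsilon)\kappa}\big)\big(\mathcal P(w)+\mathcal Q(w)\big)\Big]\Big\}$. *)

From Stdlib Require Import Reals Lra Classical ClassicalEpsilon.
Open Scope R_scope.

(* [Rint f a b] is the Riemann integral of f over [a,b] when f is Riemann
   integrable there (its value does not depend on the integrability proof,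
   cf. RiemannInt_P5); it is 0 otherwise (never used: all integrands below
   are continuous). *)
Definition Rint (f : R -> R) (a b : R) : R :=
  match excluded_middle_informative
          (exists pr : Riemann_integrable f a b, True) with
  | left H => RiemannInt (proj1_sig (constructive_indefinite_description _ H))
  | right _ => 0
  end.

Record C := mkC { Re : R; Im : R }.
Definition RtoC (x : R) : C := mkC x 0.
Definition Ci : C := mkC 0 1.
Definition Cadd (z w : C) : C := mkC (Re z + Re w) (Im z + Im w).
Definition Copp (z : C) : C := mkC (- Re z) (- Im z).
Definition Csub (z w : C) : C := Cadd z (Copp w).
Definition Cmul (z w : C) : C :=
  mkC (Re z * Re w - Im z * Im w) (Re z * Im w + Im z * Re w).
Definition Cconj (z : C) : C := mkC (Re z) (- Im z).
Definition Cnorm2 (z : C) : R := Re z * Re z + Im z * Im z.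
Definition Cinv (z : C) : C := mkC (Re z / Cnorm2 z) (- Im z / Cnorm2 z).
Definition Cdiv (z w : C) : C := Cmul z (Cinv w).
Definition Cexp (z : C) : C := mkC (exp (Re z) * cos (Im z)) (exp (Re z) * sin (Im z)).
Definition Cint (f : R -> C) (a b : R) : C :=
  mkC (Rint (fun x => Re (f x)) a b) (Rint (fun x => Im (f x)) a b).

Definition vartheta : R := / 10 ^ 10.
Definition Upsilon : R := 64 / 100.
Definition kappa : R := 1 - 5 * vartheta.

Definition P (x : R) : R := 3 * (x / Upsilon) ^ 2 - 2 * (x / Upsilon) ^ 3.
Definition P1 (x : R) : R := 6 * x / Upsilon ^ 2 - 6 * x ^ 2 / Upsilon ^ 3.
Definition P2 (x : R) : R := 6 / Upsilon ^ 2 - 12 * x / Upsilon ^ 3.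
Definition P3 (x : R) : R := - 12 / Upsilon ^ 3.
Definition Q (x : R) : R := 1 - P (Upsilon + (1 - Upsilon) * x).
Definition Q1 (x : R) : R := - (1 - Upsilon) * P1 (Upsilon + (1 - Upsilon) * x).
Definition Q2 (x : R) : R := - (1 - Upsilon) ^ 2 * P2 (Upsilon + (1 - Upsilon) * x).
Definition Q3 (x : R) : R := - (1 - Upsilon) ^ 3 * P3 (Upsilon + (1 - Upsilon) * x).

Lemma P_deriv x : derivable_pt_lim P x (P1 x).
Proof.
  unfold P, P1.
  assert (H : derivable_pt_lim (fun x => 3 * (x / Upsilon) ^ 2 - 2 * (x / Upsilon) ^ 3) x
     (3 * (INR 2 * (x / Upsilon) ^ 1 * (1 * / Upsilon)) - 2 * (INR 3 * (x / Upsilon) ^ 2 * (1 * / Upsilon)))).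
  { apply derivable_pt_lim_minus; apply derivable_pt_lim_scal;
    apply (derivable_pt_lim_comp (fun x => x / Upsilon) (fun y => y ^ _));
    try apply derivable_pt_lim_pow;
    apply (derivable_pt_lim_scal_right id); apply derivable_pt_lim_id. }
  replace (6 * x / Upsilon ^ 2 - 6 * x ^ 2 / Upsilon ^ 3) with
     (3 * (INR 2 * (x / Upsilon) ^ 1 * (1 * / Upsilon)) - 2 * (INR 3 * (x / Upsilon) ^ 2 * (1 * / Upsilon))).
  exact H. unfold Upsilon; simpl; field.
Qed.

Definition w_of (u v : R) : C := mkC u v.

Definition calP (u v : R) : C :=
  let z := Cmul (RtoC (-2 * kappa)) (w_of u v) in
  Cmul (Cexp z)
    (Cadd (Cdiv (RtoC (P2 0)) (Cmul z z)) (Cdiv (RtoC (P3 0)) (Cmul z (Cmul z z)))).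

Definition calQ (u v : R) : C :=
  let z := Cmul (RtoC (-2 * kappa * (1 - Upsilon))) (w_of u v) in
  Cmul (Cexp z)
    (Cadd (Cdiv (RtoC (Q2 0)) (Cmul z z)) (Cdiv (RtoC (Q3 0)) (Cmul z (Cmul z z)))).

Definition Dfun (u v x : R) : C :=
  let w := w_of u v in
  Csub (Cadd (Cmul (Cdiv (mkC 0 v) w) (RtoC (P1 x)))
             (Cmul (Cdiv (RtoC u) (Cmul (RtoC (2 * kappa)) (Cmul w w))) (RtoC (P2 x))))
       (Cmul (Cdiv (RtoC u) (Cmul (RtoC (4 * kappa ^ 2)) (Cmul w (Cmul w w)))) (RtoC (P3 x))).

Definition Efun (u v x : R) : C :=
  let w := w_of u v in
  Csub (Cadd (Cmul (Cdiv (RtoC u) w) (RtoC (P1 x)))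
             (Cmul (Cdiv (mkC 0 v) (Cmul (RtoC (2 * kappa)) (Cmul w w))) (RtoC (P2 x))))
       (Cmul (Cdiv (mkC 0 v) (Cmul (RtoC (4 * kappa ^ 2)) (Cmul w (Cmul w w)))) (RtoC (P3 x))).

Definition scrV1 (u v : R) : R :=
  1 + 1 / (2 * u * kappa) *
      Rint (fun x => exp (-2 * u * (1 - x) * kappa) * P1 x ^ 2) 0 Upsilon.

Definition scrV2 (u v : R) : R :=
  exp (-4 * u) *
  ( - (1 / (2 * u * kappa)) *
        Rint (fun x => exp (-2 * u * (1 - x) * kappa) * Cnorm2 (Dfun u v x)) 0 Upsilon
    + 2 * Re (Cmul (Cconj (calP u v))
                   (Cint (fun x => Cmul (Cexp (mkC 0 (-2 * v * (1 - x) * kappa))) (Dfun u v x))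
                         0 Upsilon))
    + (exp (2 * u * kappa * (1 - Upsilon)) - exp (2 * u * kappa)) * Cnorm2 (calP u v)
    + (1 - exp (2 * u * kappa * (1 - Upsilon))) * Cnorm2 (Cadd (calP u v) (calQ u v)) ).

Definition scrV3 (u v : R) : R :=
  let G := fun x => Cadd (Cmul (mkC 0 (-2 * v * kappa)) (RtoC (P x))) (RtoC (P1 x)) in
  - 2 * Re (Cmul (Cexp (Cmul (RtoC (-2)) (w_of u v)))
     (Cadd (Cadd
        (Cmul (Cinv (mkC 0 (-2 * v * kappa)))
              (Cint (fun x => Cmul (RtoC (exp (-2 * u * (1 - x) * kappa)))
                                   (Cmul (G x) (Efun u v x))) 0 Upsilon))
        (Cmul (calP u v)
              (Cint (fun x => Cmul (Cexp (mkC 0 (2 * v * (1 - x) * kappa))) (G x)) 0 Upsilon)))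
        (Cmul (Csub (RtoC 1) (Cexp (mkC 0 (2 * v * (1 - Upsilon) * kappa))))
              (Cadd (calP u v) (calQ u v))))).

Definition scrV (u v : R) : R := scrV1 u v + scrV2 u v + scrV3 u v.

(* [scrV1 - 1] is an integral of size [e^{-2u(1-Upsilon)kappa} / u], hence O(e^{-0.7u}).
   In [scrV2] the integral of [|D|^2] and both [|calP|^2]-type terms come with
   nonpositive coefficients, so only the bounded cross term survives and
   [scrV2 = O(e^{-4u})].  Every term of [scrV3] is a polynomial in [u] times [e^{-2u}];
   the delicate one is divided by [-2 i v kappa], and it stays bounded because both
   [Im (G E)] and [sin (2v)] are O(|v|).  For [u >= 10], [e^{-0.7u}] and [u e^{-2u}]
   are far below [e^{-u/2}]. *)

From Pilot Require Import Defs.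
From Stdlib Require Import Reals Lra Psatz ClassicalEpsilon.
(* Re-imported so that [C] is the complex type of [Defs], not the binomial of [Reals]. *)
Import Defs.
Open Scope R_scope.

Lemma Rabs_le_iff x M : Rabs x <= M <-> -M <= x <= M.
Proof. unfold Rabs; destruct Rcase_abs; split; intros; lra. Qed.

Lemma Rabs_of_nonneg x : 0 <= x -> Rabs x = x.
Proof. intros; apply Rabs_right; lra. Qed.

Lemma Rdiv_nonneg a b : 0 <= a -> 0 < b -> 0 <= a / b.
Proof. intros; apply Rmult_le_pos; [auto | left; apply Rinv_0_lt_compat; auto]. Qed.

Lemma Rdiv_le_of_le_mul a b c : 0 < b -> a <= c * b -> a / b <= c.
Proof.
  intros Hb H. apply Rmult_le_reg_r with b; auto.
  unfold Rdiv; rewrite Rmult_assoc, Rinv_l; lra.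
Qed.

Lemma exp_monotone x y : x <= y -> exp x <= exp y.
Proof. intros [H | ->]; [left; apply exp_increasing; auto | lra]. Qed.

Lemma exp_le_1 x : x <= 0 -> exp x <= 1.
Proof. intros; rewrite <- exp_0; apply exp_monotone; auto. Qed.

Lemma Rabs_sin_le x : Rabs (sin x) <= Rabs x.
Proof.
  assert (Hpos : forall y, 0 < y -> Rabs (sin y) <= y).
  { intros y Hy. apply Rabs_le_iff. pose proof (sin_lt_x y Hy). pose proof (SIN_bound y).
    destruct (Rle_lt_dec 1 y); [lra |].
    pose proof PI2_1. assert (0 <= sin y) by (apply sin_ge_0; lra). lra. }
  destruct (Rtotal_order x 0) as [H | [-> | H]].
  - rewrite <- (Rabs_Ropp x), <- (Rabs_Ropp (sin x)), <- sin_neg,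
      (Rabs_of_nonneg (- x)) by lra. apply Hpos; lra.
  - rewrite sin_0; lra.
  - rewrite (Rabs_of_nonneg x) by lra. auto.
Qed.

Lemma Rint_abs_le f a b M : a <= b ->
  (forall x, a <= x <= b -> Rabs (f x) <= M) -> Rabs (Rint f a b) <= (b - a) * M.
Proof.
  intros Hab HM.
  assert (HM0 : 0 <= M) by (apply Rle_trans with (Rabs (f a)); [apply Rabs_pos | apply HM; lra]).
  unfold Rint. destruct excluded_middle_informative as [Hint | _].
  2: rewrite Rabs_R0; apply Rmult_le_pos; lra.
  match goal with |- context [proj1_sig ?X] => generalize (proj1_sig X); intro pr end.
  replace ((b - a) * M) with (RiemannInt (RiemannInt_P14 a b M)) by (rewrite RiemannInt_P15; ring).
  apply Rabs_le; split.
  - replace (- RiemannInt (RiemannInt_P14 a b M)) with (RiemannInt (RiemannInt_P14 a b (- M)))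
      by (rewrite !RiemannInt_P15; ring).
    apply RiemannInt_P19; auto. intros x Hx. unfold fct_cte.
    apply (Rabs_le_iff (f x) M), HM; lra.
  - apply RiemannInt_P19; auto. intros x Hx. unfold fct_cte.
    apply (Rabs_le_iff (f x) M), HM; lra.
Qed.

Lemma Rint_ge0 f a b : a <= b -> (forall x, a <= x <= b -> 0 <= f x) -> 0 <= Rint f a b.
Proof.
  intros Hab Hf. unfold Rint. destruct excluded_middle_informative as [Hint | _]; [| lra].
  match goal with |- context [proj1_sig ?X] => generalize (proj1_sig X); intro pr end.
  replace 0 with (RiemannInt (RiemannInt_P14 a b 0)) by (rewrite RiemannInt_P15; ring).
  apply RiemannInt_P19; auto. intros x Hx. apply Hf; lra.
Qed.

Definition Cmod (z : C) : R := sqrt (Cnorm2 z).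

Lemma Cnorm2_ge0 z : 0 <= Cnorm2 z.
Proof. unfold Cnorm2; nra. Qed.

Lemma Cmod_ge0 z : 0 <= Cmod z.
Proof. apply sqrt_pos. Qed.

Lemma Cnorm2_neq0 z : 0 < Cmod z -> Cnorm2 z <> 0.
Proof. unfold Cmod; intros H E; rewrite E, sqrt_0 in H; lra. Qed.

Lemma Rabs_sqrt_sq x : Rabs x = sqrt (x * x).
Proof. rewrite <- sqrt_Rsqr_abs; reflexivity. Qed.

Lemma Cmod_mul z w : Cmod (Cmul z w) = Cmod z * Cmod w.
Proof.
  unfold Cmod. rewrite <- sqrt_mult by apply Cnorm2_ge0. f_equal.
  destruct z, w; unfold Cnorm2, Cmul; simpl; ring.
Qed.

Lemma Cmod_add_le z w : Cmod (Cadd z w) <= Cmod z + Cmod w.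
Proof.
  unfold Cmod. destruct z as [a b], w as [c d]; unfold Cnorm2, Cadd; simpl.
  set (s1 := sqrt (a * a + b * b)). set (s2 := sqrt (c * c + d * d)).
  assert (H1 : s1 * s1 = a * a + b * b) by (apply sqrt_sqrt; nra).
  assert (H2 : s2 * s2 = c * c + d * d) by (apply sqrt_sqrt; nra).
  assert (P1 : 0 <= s1) by apply sqrt_pos. assert (P2 : 0 <= s2) by apply sqrt_pos.
  assert (Cauchy_Schwarz : a * c + b * d <= s1 * s2).
  { apply Rle_trans with (Rabs (a * c + b * d)); [apply RRle_abs |].
    rewrite Rabs_sqrt_sq. unfold s1, s2. rewrite <- sqrt_mult by nra.
    apply sqrt_le_1_alt. pose proof (pow2_ge_0 (a * d - b * c)); nra. }
  rewrite <- (sqrt_square (s1 + s2)) by lra.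
  apply sqrt_le_1_alt. nra.
Qed.

Lemma Cmod_opp z : Cmod (Copp z) = Cmod z.
Proof. unfold Cmod, Cnorm2, Copp; simpl; f_equal; ring. Qed.

Lemma Cmod_sub_le z w : Cmod (Csub z w) <= Cmod z + Cmod w.
Proof. unfold Csub. rewrite <- (Cmod_opp w). apply Cmod_add_le. Qed.

Lemma Cmod_conj z : Cmod (Cconj z) = Cmod z.
Proof. unfold Cmod, Cnorm2, Cconj; simpl; f_equal; ring. Qed.

Lemma Rabs_Re_le z : Rabs (Re z) <= Cmod z.
Proof. rewrite Rabs_sqrt_sq; unfold Cmod, Cnorm2; apply sqrt_le_1_alt; nra. Qed.

Lemma Rabs_Im_le z : Rabs (Im z) <= Cmod z.
Proof. rewrite Rabs_sqrt_sq; unfold Cmod, Cnorm2; apply sqrt_le_1_alt; nra. Qed.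

Lemma Re_mul_le z w : Re (Cmul z w) <= Cmod z * Cmod w.
Proof. rewrite <- Cmod_mul. eapply Rle_trans; [apply RRle_abs | apply Rabs_Re_le]. Qed.

Lemma Cmod_le_Rabs_Re_Im z : Cmod z <= Rabs (Re z) + Rabs (Im z).
Proof.
  pose proof (Rabs_pos (Re z)); pose proof (Rabs_pos (Im z)).
  unfold Cmod, Cnorm2. rewrite <- (sqrt_square (Rabs (Re z) + Rabs (Im z))) by lra.
  apply sqrt_le_1_alt.
  assert (E1 : Re z * Re z = Rabs (Re z) * Rabs (Re z)) by (rewrite <- Rabs_mult, Rabs_of_nonneg; nra).
  assert (E2 : Im z * Im z = Rabs (Im z) * Rabs (Im z)) by (rewrite <- Rabs_mult, Rabs_of_nonneg; nra).
  rewrite E1, E2. nra.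
Qed.

Lemma Cmod_RtoC x : Cmod (RtoC x) = Rabs x.
Proof. unfold Cmod, Cnorm2, RtoC; simpl. rewrite Rabs_sqrt_sq; f_equal; ring. Qed.

Lemma Cmod_imag y : Cmod (mkC 0 y) = Rabs y.
Proof. unfold Cmod, Cnorm2; simpl. rewrite Rabs_sqrt_sq; f_equal; ring. Qed.

Lemma Cmod_exp z : Cmod (Cexp z) = exp (Re z).
Proof.
  unfold Cmod, Cnorm2, Cexp; simpl.
  replace (exp (Re z) * cos (Im z) * (exp (Re z) * cos (Im z)) +
           exp (Re z) * sin (Im z) * (exp (Re z) * sin (Im z)))
    with (exp (Re z) * exp (Re z) * (sin (Im z) ^ 2 + cos (Im z) ^ 2)) by ring.
  rewrite <- !Rsqr_pow2, sin2_cos2, Rmult_1_r.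
  apply sqrt_square. left; apply exp_pos.
Qed.

Lemma Cmod_exp_imag t : Cmod (Cexp (mkC 0 t)) = 1.
Proof. rewrite Cmod_exp; apply exp_0. Qed.

Lemma Cmod_div z w : 0 < Cmod w -> Cmod (Cdiv z w) = Cmod z / Cmod w.
Proof.
  intros Hw. unfold Cdiv, Rdiv. rewrite Cmod_mul. f_equal.
  pose proof (Cnorm2_neq0 w Hw) as H. unfold Cmod. rewrite <- sqrt_inv. f_equal.
  destruct w as [a b]; unfold Cnorm2, Cinv in *; simpl in *. unfold Cnorm2; simpl. field; auto.
Qed.

Lemma Cmod_Cint_le f a b M : a <= b -> (forall x, a <= x <= b -> Cmod (f x) <= M) ->
  Cmod (Cint f a b) <= 2 * (b - a) * M.
Proof.
  intros Hab Hf. eapply Rle_trans; [apply Cmod_le_Rabs_Re_Im |]. unfold Cint; simpl.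
  assert (HRe : Rabs (Rint (fun x => Re (f x)) a b) <= (b - a) * M).
  { apply Rint_abs_le; auto. intros x Hx. eapply Rle_trans; [apply Rabs_Re_le | auto]. }
  assert (HIm : Rabs (Rint (fun x => Im (f x)) a b) <= (b - a) * M).
  { apply Rint_abs_le; auto. intros x Hx. eapply Rle_trans; [apply Rabs_Im_le | auto]. }
  lra.
Qed.

Lemma Csub_Cadd_assoc a b c : Csub (Cadd a b) c = Cadd a (Csub b c).
Proof. destruct a, b, c; unfold Csub, Cadd, Copp; simpl; f_equal; ring. Qed.

Lemma kappa_bounds : 99/100 <= kappa <= 1.
Proof.
  unfold kappa, vartheta.
  assert (0 < / 10 ^ 10) by (apply Rinv_0_lt_compat, pow_lt; lra).
  assert (/ 10 ^ 10 <= / 500) by (apply Rinv_le_contravar; [lra | simpl; lra]).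
  lra.
Qed.

Lemma P_bounds x : 0 <= x <= Upsilon ->
  Rabs (P x) <= 1 /\ Rabs (P1 x) <= 3 /\ Rabs (P2 x) <= 15 /\ Rabs (P3 x) <= 46.
Proof.
  intros Hx. unfold P, P1, P2, P3, Upsilon in *.
  set (t := x / (64/100)).
  assert (Ht : 0 <= t <= 1) by (unfold t; split; [apply Rdiv_nonneg | apply Rdiv_le_of_le_mul]; lra).
  replace x with (64/100 * t) by (unfold t; field).
  pose proof (pow2_ge_0 (t - 1/2)).
  pose proof (Rmult_le_pos ((1 - t) ^ 2) (1 + 2 * t) ltac:(nra) ltac:(lra)).
  repeat split; apply Rabs_le_iff; split; field_simplify; nra.
Qed.

Lemma P_Q_bounds_at_0 :
  Rabs (P2 0) <= 15 /\ Rabs (P3 0) <= 46 /\ Rabs (Q2 0) <= 2 /\ Rabs (Q3 0) <= 3.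
Proof.
  unfold Q2, Q3, P2, P3, Upsilon.
  repeat split; apply Rabs_le_iff; split; field_simplify; lra.
Qed.

Lemma exp_weight_le u x : 0 <= u -> 0 <= x <= Upsilon ->
  exp (-2 * u * (1 - x) * kappa) <= exp (- (7/10) * u).
Proof.
  intros Hu Hx. pose proof kappa_bounds. unfold Upsilon in Hx. apply exp_monotone.
  assert (35/100 <= (1 - x) * kappa) by nra. nra.
Qed.

Lemma exp_weight_le_1 u x : 0 <= u -> 0 <= x <= Upsilon -> exp (-2 * u * (1 - x) * kappa) <= 1.
Proof.
  intros Hu Hx. eapply Rle_trans; [apply exp_weight_le; auto | apply exp_le_1; lra].
Qed.

Lemma Cmod_w_of u v : 0 <= u -> u <= Cmod (w_of u v) /\ Rabs v <= Cmod (w_of u v).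
Proof.
  intros Hu. unfold Cmod, Cnorm2, w_of; simpl. split.
  - rewrite <- (sqrt_square u) at 1 by lra. apply sqrt_le_1_alt. nra.
  - rewrite Rabs_sqrt_sq. apply sqrt_le_1_alt. nra.
Qed.

Definition Pderiv_tail (b w : C) (x : R) : C :=
  Csub (Cmul (Cdiv b (Cmul (RtoC (2 * kappa)) (Cmul w w))) (RtoC (P2 x)))
       (Cmul (Cdiv b (Cmul (RtoC (4 * kappa ^ 2)) (Cmul w (Cmul w w)))) (RtoC (P3 x))).

Definition Pderiv_combo (a b w : C) (x : R) : C :=
  Cadd (Cmul (Cdiv a w) (RtoC (P1 x))) (Pderiv_tail b w x).

Lemma Dfun_combo u v x : Dfun u v x = Pderiv_combo (mkC 0 v) (RtoC u) (w_of u v) x.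
Proof. unfold Dfun, Pderiv_combo, Pderiv_tail. apply Csub_Cadd_assoc. Qed.

Lemma Efun_combo u v x : Efun u v x = Pderiv_combo (RtoC u) (mkC 0 v) (w_of u v) x.
Proof. unfold Efun, Pderiv_combo, Pderiv_tail. apply Csub_Cadd_assoc. Qed.

Lemma Cmod_Pderiv_tail_le b w x : 10 <= Cmod w -> 0 <= x <= Upsilon ->
  Cmod (Pderiv_tail b w x) <= Cmod b / Cmod w.
Proof.
  intros Hw Hx. destruct (P_bounds x Hx) as (_ & _ & B2 & B3). pose proof kappa_bounds.
  assert (100 <= Cmod w * Cmod w) by nra.
  assert (1000 <= Cmod w * (Cmod w * Cmod w)) by nra.
  assert (H2 : 0 < Cmod (Cmul (RtoC (2 * kappa)) (Cmul w w)))
    by (rewrite !Cmod_mul, Cmod_RtoC, Rabs_of_nonneg; nra).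
  assert (H3 : 0 < Cmod (Cmul (RtoC (4 * kappa ^ 2)) (Cmul w (Cmul w w))))
    by (rewrite !Cmod_mul, Cmod_RtoC, Rabs_of_nonneg; nra).
  unfold Pderiv_tail. eapply Rle_trans; [apply Cmod_sub_le |].
  rewrite !Cmod_mul, !Cmod_div, !Cmod_mul, !Cmod_RtoC by nra.
  rewrite (Rabs_of_nonneg (2 * kappa)), (Rabs_of_nonneg (4 * kappa ^ 2)) by nra.
  set (n := Cmod w) in *. set (t := Cmod b / n).
  assert (Ht : 0 <= t) by (apply Rdiv_nonneg; [apply Cmod_ge0 | lra]).
  replace (Cmod b / (2 * kappa * (n * n))) with (t * / (2 * kappa * n)) by (unfold t; field; nra).
  replace (Cmod b / (4 * kappa ^ 2 * (n * (n * n)))) with (t * / (4 * kappa ^ 2 * (n * n)))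
    by (unfold t; field; nra).
  assert (/ (2 * kappa * n) <= / 19) by (apply Rinv_le_contravar; nra).
  assert (/ (4 * kappa ^ 2 * (n * n)) <= / 390) by (apply Rinv_le_contravar; nra).
  assert (0 < / (2 * kappa * n)) by (apply Rinv_0_lt_compat; nra).
  assert (0 < / (4 * kappa ^ 2 * (n * n))) by (apply Rinv_0_lt_compat; nra).
  pose proof (Rabs_pos (P2 x)); pose proof (Rabs_pos (P3 x)).
  assert (/ (2 * kappa * n) * Rabs (P2 x) <= / 19 * 15) by (apply Rmult_le_compat; lra).
  assert (/ (4 * kappa ^ 2 * (n * n)) * Rabs (P3 x) <= / 390 * 46) by (apply Rmult_le_compat; lra).
  nra.
Qed.

Lemma Cmod_Pderiv_combo_le a b w x : 10 <= Cmod w -> Cmod a <= Cmod w -> Cmod b <= Cmod w ->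
  0 <= x <= Upsilon -> Cmod (Pderiv_combo a b w x) <= 4.
Proof.
  intros Hw Ha Hb Hx. destruct (P_bounds x Hx) as (_ & B1 & _).
  unfold Pderiv_combo. eapply Rle_trans; [apply Cmod_add_le |].
  pose proof (Cmod_Pderiv_tail_le b w x Hw Hx).
  rewrite Cmod_mul, Cmod_div, Cmod_RtoC by lra.
  assert (Cmod a / Cmod w <= 1) by (apply Rdiv_le_of_le_mul; lra).
  assert (Cmod b / Cmod w <= 1) by (apply Rdiv_le_of_le_mul; lra).
  pose proof (Rdiv_nonneg (Cmod a) (Cmod w) (Cmod_ge0 a) ltac:(lra)).
  pose proof (Rabs_pos (P1 x)). nra.
Qed.

Lemma Cmod_D_le u v x : 10 <= u -> 0 <= x <= Upsilon -> Cmod (Dfun u v x) <= 4.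
Proof.
  intros Hu Hx. destruct (Cmod_w_of u v) as [Hu' Hv']; [lra |].
  rewrite Dfun_combo. apply Cmod_Pderiv_combo_le; auto;
    [lra | rewrite Cmod_imag | rewrite Cmod_RtoC, Rabs_of_nonneg]; lra.
Qed.

Lemma Cmod_E_le u v x : 10 <= u -> 0 <= x <= Upsilon -> Cmod (Efun u v x) <= 4.
Proof.
  intros Hu Hx. destruct (Cmod_w_of u v) as [Hu' Hv']; [lra |].
  rewrite Efun_combo. apply Cmod_Pderiv_combo_le; auto;
    [lra | rewrite Cmod_RtoC, Rabs_of_nonneg | rewrite Cmod_imag]; lra.
Qed.

Lemma Cmod_exp_inv_powers_le (z : C) (c2 c3 r : R) : Re z <= 0 -> 0 < r <= Cmod z ->
  Cmod (Cmul (Cexp z) (Cadd (Cdiv (RtoC c2) (Cmul z z)) (Cdiv (RtoC c3) (Cmul z (Cmul z z)))))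
  <= Rabs c2 / r ^ 2 + Rabs c3 / r ^ 3.
Proof.
  intros Hz Hr. rewrite Cmod_mul, Cmod_exp.
  pose proof (exp_le_1 _ Hz). pose proof (exp_pos (Re z)).
  assert (Hsum : Cmod (Cadd (Cdiv (RtoC c2) (Cmul z z)) (Cdiv (RtoC c3) (Cmul z (Cmul z z))))
                 <= Rabs c2 / r ^ 2 + Rabs c3 / r ^ 3).
  { assert (0 < Cmod z) by lra.
    assert (Hz2 : 0 < Cmod (Cmul z z)) by (rewrite Cmod_mul; nra).
    assert (Hz3 : 0 < Cmod (Cmul z (Cmul z z))) by (rewrite Cmod_mul; nra).
    eapply Rle_trans; [apply Cmod_add_le |].
    rewrite (Cmod_div _ _ Hz2), (Cmod_div _ _ Hz3), !Cmod_mul, !Cmod_RtoC.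
    pose proof (Rabs_pos c2); pose proof (Rabs_pos c3).
    replace (Cmod z * (Cmod z * Cmod z)) with (Cmod z ^ 3) by ring.
    replace (Cmod z * Cmod z) with (Cmod z ^ 2) by ring.
    apply Rplus_le_compat; unfold Rdiv; apply Rmult_le_compat_l; auto;
      apply Rinv_le_contravar; (apply pow_lt || apply pow_incr); lra. }
  pose proof (Cmod_ge0 (Cadd (Cdiv (RtoC c2) (Cmul z z)) (Cdiv (RtoC c3) (Cmul z (Cmul z z))))).
  nra.
Qed.

Lemma Cmod_calP_le u v : 10 <= u -> Cmod (calP u v) <= 1.
Proof.
  intros Hu. destruct P_Q_bounds_at_0 as (B2 & B3 & _). pose proof kappa_bounds.
  destruct (Cmod_w_of u v) as [Hn _]; [lra |].
  eapply Rle_trans; [apply (Cmod_exp_inv_powers_le _ _ _ 19) |].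
  - simpl; nra.
  - rewrite Cmod_mul, Cmod_RtoC, Rabs_left by nra. nra.
  - assert (Rabs (P2 0) / 19 ^ 2 <= 1/2) by (apply Rdiv_le_of_le_mul; simpl; lra).
    assert (Rabs (P3 0) / 19 ^ 3 <= 1/2) by (apply Rdiv_le_of_le_mul; simpl; lra).
    lra.
Qed.

Lemma Cmod_calQ_le u v : 10 <= u -> Cmod (calQ u v) <= 1.
Proof.
  intros Hu. destruct P_Q_bounds_at_0 as (_ & _ & B2 & B3). pose proof kappa_bounds.
  destruct (Cmod_w_of u v) as [Hn _]; [lra |].
  eapply Rle_trans; [apply (Cmod_exp_inv_powers_le _ _ _ 7) |].
  - unfold Upsilon; simpl; nra.
  - rewrite Cmod_mul, Cmod_RtoC, Rabs_left by (unfold Upsilon; nra). unfold Upsilon; nra.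
  - assert (Rabs (Q2 0) / 7 ^ 2 <= 1/2) by (apply Rdiv_le_of_le_mul; simpl; lra).
    assert (Rabs (Q3 0) / 7 ^ 3 <= 1/2) by (apply Rdiv_le_of_le_mul; simpl; lra).
    lra.
Qed.

Lemma V1_le u v : 10 <= u -> scrV1 u v <= 1 + 3/10 * exp (- (7/10) * u).
Proof.
  intros Hu. pose proof kappa_bounds. unfold scrV1.
  set (I := Rint _ 0 Upsilon).
  assert (HI : Rabs I <= (Upsilon - 0) * (exp (- (7/10) * u) * 9)).
  { apply Rint_abs_le; [unfold Upsilon; lra |]. intros x Hx.
    destruct (P_bounds x Hx) as (_ & B1 & _).
    rewrite Rabs_mult, (Rabs_of_nonneg (exp _)), <- RPow_abs by (left; apply exp_pos).
    pose proof (Rabs_pos (P1 x)).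
    apply Rmult_le_compat; [left; apply exp_pos | apply pow_le, Rabs_pos | |].
    - apply exp_weight_le; lra.
    - simpl; nra. }
  apply Rabs_le_iff in HI. unfold Upsilon in HI.
  assert (Hc : 0 < 1 / (2 * u * kappa)) by (apply Rdiv_pos_pos; nra).
  assert (Hc' : 1 / (2 * u * kappa) <= 10/198) by (apply Rdiv_le_of_le_mul; nra).
  pose proof (exp_pos (- (7/10) * u)).
  assert (1 / (2 * u * kappa) * I <= 1 / (2 * u * kappa) * (64/100 * (exp (- (7/10) * u) * 9)))
    by (apply Rmult_le_compat_l; lra).
  nra.
Qed.

Lemma V2_le u v : 10 <= u -> scrV2 u v <= 11 * exp (-4 * u).
Proof.
  intros Hu. pose proof kappa_bounds. unfold scrV2.
  set (I := Rint _ 0 Upsilon).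
  set (J := Cint _ 0 Upsilon).
  assert (HI : 0 <= I).
  { apply Rint_ge0; [unfold Upsilon; lra |]. intros x Hx.
    apply Rmult_le_pos; [left; apply exp_pos | apply Cnorm2_ge0]. }
  assert (HJ : Cmod J <= 2 * (Upsilon - 0) * 4).
  { apply Cmod_Cint_le; [unfold Upsilon; lra |]. intros x Hx.
    rewrite Cmod_mul, Cmod_exp_imag, Rmult_1_l. apply Cmod_D_le; auto. }
  assert (Hcross : Re (Cmul (Cconj (calP u v)) J) <= 2 * (Upsilon - 0) * 4).
  { eapply Rle_trans; [apply Re_mul_le |]. rewrite Cmod_conj.
    pose proof (Cmod_calP_le u v Hu). pose proof (Cmod_ge0 (calP u v)). pose proof (Cmod_ge0 J).
    unfold Upsilon in *. nra. }
  assert (Hc : 0 <= 1 / (2 * u * kappa)) by (apply Rdiv_nonneg; nra).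
  assert (E1 : exp (2 * u * kappa * (1 - Upsilon)) <= exp (2 * u * kappa))
    by (apply exp_monotone; unfold Upsilon; nra).
  assert (E2 : 1 <= exp (2 * u * kappa * (1 - Upsilon)))
    by (rewrite <- exp_0 at 1; apply exp_monotone; unfold Upsilon; nra).
  pose proof (Cnorm2_ge0 (calP u v)). pose proof (Cnorm2_ge0 (Cadd (calP u v) (calQ u v))).
  rewrite (Rmult_comm 11). apply Rmult_le_compat_l; [left; apply exp_pos |].
  assert (- (1 / (2 * u * kappa)) * I <= 0) by nra.
  assert ((exp (2 * u * kappa * (1 - Upsilon)) - exp (2 * u * kappa)) * Cnorm2 (calP u v) <= 0) by nra.
  assert ((1 - exp (2 * u * kappa * (1 - Upsilon))) * Cnorm2 (Cadd (calP u v) (calQ u v)) <= 0) by nra.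
  unfold Upsilon in *. lra.
Qed.

Definition Gfun (v x : R) : C := Cadd (Cmul (mkC 0 (-2 * v * kappa)) (RtoC (P x))) (RtoC (P1 x)).

Lemma Cmod_G_le v x : 0 <= x <= Upsilon -> Cmod (Gfun v x) <= 2 * Rabs v + 3.
Proof.
  intros Hx. destruct (P_bounds x Hx) as (B0 & B1 & _). pose proof kappa_bounds.
  unfold Gfun. eapply Rle_trans; [apply Cmod_add_le |].
  rewrite Cmod_mul, Cmod_imag, !Cmod_RtoC, !Rabs_mult, (Rabs_of_nonneg kappa) by lra.
  replace (Rabs (-2)) with 2 by (rewrite Rabs_left; lra).
  pose proof (Rabs_pos v); pose proof (Rabs_pos (P x)).
  assert (kappa * Rabs (P x) <= 1) by nra.
  nra.
Qed.

Lemma Im_G_mul_first_term u v p p1 : 0 < u ->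
  Im (Cmul (Cadd (Cmul (mkC 0 (-2 * v * kappa)) (RtoC p)) (RtoC p1))
           (Cmul (Cdiv (RtoC u) (w_of u v)) (RtoC p1)))
  = v * (- (u * p1 * p1) - 2 * kappa * p * p1 * (u * u)) / (u * u + v * v).
Proof.
  intros Hu. unfold Cmul, Cadd, Cdiv, Cinv, RtoC, w_of, Cnorm2; simpl. field. nra.
Qed.

Lemma Im_mul_add g a b : Im (Cmul g (Cadd a b)) = Im (Cmul g a) + Im (Cmul g b).
Proof. destruct g, a, b; unfold Cmul, Cadd; simpl; ring. Qed.

(* [G E] is not small, but its imaginary part is [O(|v|)]: this is what keeps the
   term of [scrV3] divided by [-2 i v kappa] bounded as [v -> 0]. *)
Lemma Rabs_Im_G_E_le u v x : 10 <= u -> 0 <= x <= Upsilon ->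
  Rabs (Im (Cmul (Gfun v x) (Efun u v x))) <= 10 * Rabs v.
Proof.
  intros Hu Hx. destruct (P_bounds x Hx) as (B0 & B1 & _). pose proof kappa_bounds.
  destruct (Cmod_w_of u v) as [Hn Hv]; [lra |].
  set (n := Cmod (w_of u v)) in *.
  rewrite Efun_combo. unfold Pderiv_combo.
  rewrite Im_mul_add.
  eapply Rle_trans; [apply Rabs_triang |].
  assert (Hfirst : Rabs (Im (Cmul (Gfun v x) (Cmul (Cdiv (RtoC u) (w_of u v)) (RtoC (P1 x)))))
                   <= 7 * Rabs v).
  { unfold Gfun. rewrite Im_G_mul_first_term by lra.
    unfold Rdiv. rewrite !Rabs_mult, Rabs_inv, (Rabs_of_nonneg (u * u + v * v)) by nra.
    rewrite Rmult_assoc, (Rmult_comm 7). apply Rmult_le_compat_l; [apply Rabs_pos |].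
    apply Rdiv_le_of_le_mul; [nra |].
    eapply Rle_trans; [apply Rabs_triang |].
    rewrite Rabs_Ropp, !Rabs_mult, Rabs_Ropp, !Rabs_mult, !(Rabs_of_nonneg u),
      (Rabs_of_nonneg kappa), (Rabs_of_nonneg 2) by lra.
    pose proof (Rabs_pos (P x)); pose proof (Rabs_pos (P1 x)).
    assert (Rabs (P1 x) * Rabs (P1 x) <= 9) by nra.
    assert (Rabs (P x) * Rabs (P1 x) <= 3) by nra.
    assert (kappa * Rabs (P x) * Rabs (P1 x) <= 3) by nra.
    assert (u * Rabs (P1 x) * Rabs (P1 x) <= 9 * u) by nra.
    assert (2 * kappa * Rabs (P x) * Rabs (P1 x) * (u * u) <= 6 * (u * u))
      by (apply Rmult_le_compat_r; nra).
    nra. }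
  assert (Htail : Rabs (Im (Cmul (Gfun v x) (Pderiv_tail (mkC 0 v) (w_of u v) x)))
                  <= (2 * Rabs v + 3) * (Rabs v / n)).
  { eapply Rle_trans; [apply Rabs_Im_le |]. rewrite Cmod_mul.
    pose proof (Cmod_Pderiv_tail_le (mkC 0 v) (w_of u v) x (Rle_trans _ _ _ Hu Hn) Hx) as Ht.
    rewrite Cmod_imag in Ht.
    apply Rmult_le_compat; auto using Cmod_ge0, Cmod_G_le. }
  assert (Rabs v / n <= 1) by (apply Rdiv_le_of_le_mul; lra).
  assert (Rabs v / n <= Rabs v / 10)
    by (apply Rmult_le_compat_l; [apply Rabs_pos | apply Rinv_le_contravar; lra]).
  pose proof (Rabs_pos v). nra.
Qed.

Definition GE_integral (u v : R) : C :=
  Cint (fun x => Cmul (RtoC (exp (-2 * u * (1 - x) * kappa))) (Cmul (Gfun v x) (Efun u v x)))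
       0 Upsilon.

Definition V3_integral_term (u v : R) : C := Cmul (Cinv (mkC 0 (-2 * v * kappa))) (GE_integral u v).

Definition V3_P_term (u v : R) : C :=
  Cmul (calP u v)
       (Cint (fun x => Cmul (Cexp (mkC 0 (2 * v * (1 - x) * kappa))) (Gfun v x)) 0 Upsilon).

Definition V3_boundary_term (u v : R) : C :=
  Cmul (Csub (RtoC 1) (Cexp (mkC 0 (2 * v * (1 - Upsilon) * kappa)))) (Cadd (calP u v) (calQ u v)).

Lemma scrV3_eq u v : scrV3 u v =
  - 2 * (Re (Cmul (Cexp (Cmul (RtoC (-2)) (w_of u v))) (V3_integral_term u v))
         + Re (Cmul (Cexp (Cmul (RtoC (-2)) (w_of u v)))
                    (Cadd (V3_P_term u v) (V3_boundary_term u v)))).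
Proof.
  unfold scrV3, V3_integral_term, GE_integral, V3_P_term, V3_boundary_term, Gfun; cbv zeta.
  f_equal. destruct (Cexp _), (Cmul (Cinv _) _), (Cmul (calP u v) _), (Cmul (Csub _ _) _).
  unfold Cmul, Cadd; simpl; ring.
Qed.

Lemma Cmod_V3_P_term_le u v : 10 <= u -> Rabs v <= 5 * u ->
  Cmod (V3_P_term u v) <= 128/100 * (10 * u + 3).
Proof.
  intros Hu Hv. unfold V3_P_term. rewrite Cmod_mul.
  pose proof (Cmod_calP_le u v Hu).
  assert (HI : Cmod (Cint (fun x => Cmul (Cexp (mkC 0 (2 * v * (1 - x) * kappa))) (Gfun v x)) 0 Upsilon)
               <= 2 * (Upsilon - 0) * (10 * u + 3)).
  { apply Cmod_Cint_le; [unfold Upsilon; lra |]. intros x Hx.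
    rewrite Cmod_mul, Cmod_exp_imag. pose proof (Cmod_G_le v x Hx). lra. }
  apply Rle_trans with (1 * (2 * (Upsilon - 0) * (10 * u + 3))).
  - apply Rmult_le_compat; auto using Cmod_ge0.
  - unfold Upsilon; lra.
Qed.

Lemma Cmod_V3_boundary_term_le u v : 10 <= u -> Cmod (V3_boundary_term u v) <= 4.
Proof.
  intros Hu. unfold V3_boundary_term. rewrite Cmod_mul.
  pose proof (Cmod_calP_le u v Hu). pose proof (Cmod_calQ_le u v Hu).
  assert (Cmod (Csub (RtoC 1) (Cexp (mkC 0 (2 * v * (1 - Upsilon) * kappa)))) <= 2)
    by (eapply Rle_trans; [apply Cmod_sub_le |]; rewrite Cmod_RtoC, Cmod_exp_imag, Rabs_R1; lra).
  assert (Cmod (Cadd (calP u v) (calQ u v)) <= 2) by (eapply Rle_trans; [apply Cmod_add_le | lra]).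
  apply Rle_trans with (2 * 2); [apply Rmult_le_compat; auto using Cmod_ge0 | lra].
Qed.

Lemma Re_mul_inv_imag e j a : a <> 0 ->
  Re (Cmul e (Cmul (Cinv (mkC 0 a)) j)) = (Re e * Im j + Im e * Re j) / a.
Proof. intros. destruct e, j; unfold Cmul, Cinv, Cnorm2; simpl. field. auto. Qed.

Lemma Im_RtoC_mul r z : Im (Cmul (RtoC r) z) = r * Im z.
Proof. destruct z; unfold Cmul, RtoC; simpl; ring. Qed.

Lemma Rabs_Im_GE_integral_le u v : 10 <= u ->
  Rabs (Im (GE_integral u v)) <= 64/100 * (10 * Rabs v).
Proof.
  intros Hu. unfold GE_integral, Cint; cbn [Im].
  replace (64/100) with (Upsilon - 0) by (unfold Upsilon; ring).
  apply Rint_abs_le; [unfold Upsilon; lra |]. intros x Hx.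
  rewrite Im_RtoC_mul, Rabs_mult, Rabs_of_nonneg by (left; apply exp_pos).
  pose proof (exp_weight_le_1 u x ltac:(lra) Hx). pose proof (exp_pos (-2 * u * (1 - x) * kappa)).
  pose proof (Rabs_Im_G_E_le u v x Hu Hx). pose proof (Rabs_pos (Im (Cmul (Gfun v x) (Efun u v x)))).
  nra.
Qed.

Lemma Rabs_Re_GE_integral_le u v : 10 <= u ->
  Rabs (Re (GE_integral u v)) <= 64/100 * ((2 * Rabs v + 3) * 4).
Proof.
  intros Hu. unfold GE_integral, Cint; cbn [Re].
  replace (64/100) with (Upsilon - 0) by (unfold Upsilon; ring).
  apply Rint_abs_le; [unfold Upsilon; lra |]. intros x Hx.
  eapply Rle_trans; [apply Rabs_Re_le |].
  rewrite !Cmod_mul, Cmod_RtoC, Rabs_of_nonneg by (left; apply exp_pos).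
  pose proof (exp_weight_le_1 u x ltac:(lra) Hx). pose proof (exp_pos (-2 * u * (1 - x) * kappa)).
  pose proof (Cmod_G_le v x Hx). pose proof (Cmod_E_le u v x Hu Hx).
  pose proof (Cmod_ge0 (Gfun v x)). pose proof (Cmod_ge0 (Efun u v x)).
  assert (Cmod (Gfun v x) * Cmod (Efun u v x) <= (2 * Rabs v + 3) * 4)
    by (apply Rmult_le_compat; lra).
  nra.
Qed.

Lemma Rabs_Re_Im_exp_m2w_le u v :
  Rabs (Re (Cexp (Cmul (RtoC (-2)) (w_of u v)))) <= exp (-2 * u) /\
  Rabs (Im (Cexp (Cmul (RtoC (-2)) (w_of u v)))) <= exp (-2 * u) * (2 * Rabs v).
Proof.
  simpl. rewrite !Rabs_mult, !(Rabs_of_nonneg (exp _)) by (left; apply exp_pos).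
  replace (-2 * u - 0 * v) with (-2 * u) by ring.
  replace (-2 * v + 0 * u) with (-2 * v) by ring.
  pose proof (exp_pos (-2 * u)). split.
  - assert (Rabs (cos (-2 * v)) <= 1) by (apply Rabs_le_iff, COS_bound).
    rewrite <- (Rmult_1_r (exp (-2 * u))) at 2. apply Rmult_le_compat_l; lra.
  - pose proof (Rabs_sin_le (-2 * v)) as Hs. rewrite Rabs_mult in Hs.
    replace (Rabs (-2)) with 2 in Hs by (rewrite Rabs_left; lra).
    apply Rmult_le_compat_l; lra.
Qed.

Lemma Re_V3_integral_term_ge u v : 10 <= u -> v <> 0 -> Rabs v <= 5 * u ->
  - (exp (-2 * u) * (26 * u + 12))
  <= Re (Cmul (Cexp (Cmul (RtoC (-2)) (w_of u v))) (V3_integral_term u v)).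
Proof.
  intros Hu Hv0 Hv. pose proof kappa_bounds.
  assert (Hva : 0 < Rabs v) by (apply Rabs_pos_lt; auto).
  unfold V3_integral_term. rewrite Re_mul_inv_imag by (intro E; apply Hv0; nra).
  pose proof (Rabs_Im_GE_integral_le u v Hu) as HImJ.
  pose proof (Rabs_Re_GE_integral_le u v Hu) as HReJ.
  destruct (Rabs_Re_Im_exp_m2w_le u v) as [HRe HIm].
  set (J := GE_integral u v) in *. set (E := Cexp (Cmul (RtoC (-2)) (w_of u v))) in *.
  assert (Habs_a : Rabs (-2 * v * kappa) = 2 * kappa * Rabs v).
  { rewrite !Rabs_mult, (Rabs_of_nonneg kappa) by lra.
    replace (Rabs (-2)) with 2 by (rewrite Rabs_left; lra). ring. }
  assert (Hnum : Rabs (Re E * Im J + Im E * Re J)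
                 <= exp (-2 * u) * Rabs v * (64/100 * 10 + 2 * (64/100 * ((2 * Rabs v + 3) * 4)))).
  { eapply Rle_trans; [apply Rabs_triang |]. rewrite !Rabs_mult.
    pose proof (Rabs_pos (Re E)); pose proof (Rabs_pos (Im E)).
    pose proof (Rabs_pos (Im J)); pose proof (Rabs_pos (Re J)).
    apply Rle_trans with (exp (-2 * u) * (64/100 * (10 * Rabs v))
                          + exp (-2 * u) * (2 * Rabs v) * (64/100 * ((2 * Rabs v + 3) * 4))).
    - apply Rplus_le_compat; apply Rmult_le_compat; lra.
    - lra. }
  assert (Hquot : Rabs ((Re E * Im J + Im E * Re J) / (-2 * v * kappa)) <= exp (-2 * u) * (26 * u + 12)).
  { unfold Rdiv. rewrite Rabs_mult, Rabs_inv, Habs_a.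
    apply Rdiv_le_of_le_mul; [nra |]. eapply Rle_trans; [apply Hnum |].
    pose proof (exp_pos (-2 * u)).
    assert (64/100 * 10 + 2 * (64/100 * ((2 * Rabs v + 3) * 4)) <= (26 * u + 12) * (2 * kappa)) by nra.
    assert (0 < exp (-2 * u) * Rabs v) by nra.
    nra. }
  apply Rabs_le_iff in Hquot. lra.
Qed.

Lemma V3_le u v : 10 <= u -> v <> 0 -> Rabs v <= 5 * u ->
  scrV3 u v <= exp (-2 * u) * (80 * u + 40).
Proof.
  intros Hu Hv0 Hv. rewrite scrV3_eq.
  pose proof (Re_V3_integral_term_ge u v Hu Hv0 Hv).
  set (E := Cexp (Cmul (RtoC (-2)) (w_of u v))) in *.
  assert (HE : Cmod E = exp (-2 * u)) by (unfold E; rewrite Cmod_exp; simpl; f_equal; ring).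
  assert (Hrest : Rabs (Re (Cmul E (Cadd (V3_P_term u v) (V3_boundary_term u v))))
                  <= exp (-2 * u) * (128/100 * (10 * u + 3) + 4)).
  { eapply Rle_trans; [apply Rabs_Re_le |]. rewrite Cmod_mul, HE.
    apply Rmult_le_compat_l; [left; apply exp_pos |].
    eapply Rle_trans; [apply Cmod_add_le |].
    pose proof (Cmod_V3_P_term_le u v Hu Hv). pose proof (Cmod_V3_boundary_term_le u v Hu). lra. }
  apply Rabs_le_iff in Hrest. pose proof (exp_pos (-2 * u)). nra.
Qed.

Lemma exp_pow x n : exp x ^ n = exp (INR n * x).
Proof.
  induction n as [| n IH]; simpl; [rewrite Rmult_0_l, exp_0; ring |].
  rewrite IH, <- exp_plus. f_equal. destruct n; simpl; ring.
Qed.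

Lemma exp_sum_le u : 10 <= u ->
  3/10 * exp (- (7/10) * u) + 11 * exp (-4 * u) + exp (-2 * u) * (80 * u + 40) <= exp (- u / 2).
Proof.
  intros Hu. set (a := exp (- u / 2)). assert (Ha : 0 < a) by apply exp_pos.
  assert (E1 : exp (- (7/10) * u) = a * exp (- (2/10) * u)) by (unfold a; rewrite <- exp_plus; f_equal; field).
  assert (E2 : exp (-2 * u) = a * exp (- (15/10) * u)) by (unfold a; rewrite <- exp_plus; f_equal; field).
  assert (E3 : exp (-4 * u) <= exp (-2 * u)) by (apply exp_monotone; lra).
  assert (B1 : exp (- (2/10) * u) <= 1/3).
  { assert (H1 : exp (- (2/10) * u) * exp ((2/10) * u) = 1)
      by (rewrite <- exp_plus, <- exp_0; f_equal; ring).
    pose proof (exp_ineq1_le ((2/10) * u)). pose proof (exp_pos (- (2/10) * u)). nra. }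
  (* [e^{1.5u} = t^10] with [t = e^{0.15u} >= 1 + 0.15u] beats the linear factor. *)
  assert (B2 : exp (- (15/10) * u) * (80 * u + 51) <= 6/10).
  { assert (H1 : exp (- (15/10) * u) * exp ((15/100) * u) ^ 10 = 1).
    { rewrite exp_pow, <- exp_plus, <- exp_0. f_equal. simpl. field. }
    set (t := exp ((15/100) * u)) in *.
    assert (Ht : 1 + (15/100) * u <= t) by apply exp_ineq1_le.
    assert (Ht9 : (25/10) ^ 9 <= t ^ 9) by (apply pow_incr; lra).
    assert (80 * u + 51 <= 6/10 * t ^ 10).
    { replace (t ^ 10) with (t * t ^ 9) by ring.
      assert (534 * t <= 6/10 * (t * (25/10) ^ 9)) by (simpl; nra). nra. }
    pose proof (exp_pos (- (15/10) * u)). nra. }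
  rewrite E1, E2 in *. pose proof (exp_pos (- (2/10) * u)). pose proof (exp_pos (- (15/10) * u)).
  assert (a * exp (- (15/10) * u) * (80 * u + 51) <= a * (6/10))
    by (rewrite Rmult_assoc; apply Rmult_le_compat_l; lra).
  nra.
Qed.

Theorem lemma5p6 : forall u v : R,
  10 <= u -> v <> 0 -> Rabs v <= 5 * u ->
  scrV u v <= 1 + exp (- u / 2).
Proof.
  intros u v Hu Hv0 Hv. unfold scrV.
  pose proof (V1_le u v Hu). pose proof (V2_le u v Hu). pose proof (V3_le u v Hu Hv0 Hv).
  pose proof (exp_sum_le u Hu). lra.
Qed.
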